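(* Let $(A\to M,\rho,[\cdot,\cdot])$ be a Lie algebroid and $\nabla\colon\mathfrak X(M)\times\Gamma(A)\to\Gamma(A)$ a linear connection. Consider the 2-representation $(\nabla^{\rm bas},\nabla^{\rm bas},R^{\rm bas}_\nabla)$ of the Lie algebroid $A$ on the complex $\rho\colon A\to TM$, and the 2-representation $(\nabla,\nabla,R_\nabla)$ of the Lie algebroid $TM$ (anchor $\mathrm{Id}_{TM}$, Lie bracket of vector fields) on the complex $\mathrm{Id}_A\colon A\to A$. These two 2-representations form a matched pair, where in the definition of matched pair the first Lie algebroid is $A$, the second is $TM$, the common complex term is $C:=A$, $\partial_B:=\rho\colon A\to TM$ and $\partial_A:=\mathrm{Id}_A$.
   Context: $R_\nabla(X,Y)=\nabla_X\nabla_Y-\nabla_Y\nabla_X-\nabla_{[X,Y]}$. The basic connections are $\nabla^{\rm bas}_aX=[\rho(a),X]+\rho(\nabla_Xa)$ on $TM$ and $\nabla^{\rm bas}_{a_1}a_2=[a_1,a_2]+\nabla_{\rho(a_2)}a_1$ on $A$, and $R^{\rm bas}_\nabla\in\Omega^2(A,\mathrm{Hom}(TM,A))$ is $R^{\rm bas}_\nabla(a_1,a_2)X=-\nabla_X[a_1,a_2]+[\nabla_Xa_1,a_2]+[a_1,\nabla_Xa_2]+\nabla_{\nabla^{\rm bas}_{a_2}X}a_1-\nabla_{\nabla^{\rm bas}_{a_1}X}a_2$. Matched pair: Lie algebroids $A,B$ over $M$, a 2-representation $(\nabla^{AB},\nabla^{AC},R_A)$ of $A$ on $\partial_B\colon C\to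 B$ ($R_A\in\Omega^2(A,\mathrm{Hom}(B,C))$) and $(\nabla^{BA},\nabla^{BC},R_B)$ of $B$ on $\partial_A\colon C\to A$ ($R_B\in\Omega^2(B,\mathrm{Hom}(A,C))$). Writing $\nabla$ for all four connections, they form a matched pair if for all $a,a_i\in\Gamma(A)$, $b,b_i\in\Gamma(B)$, $c,c_i\in\Gamma(C)$: (M1) $\rho_A\partial_A=\rho_B\partial_B$; (M2) $\nabla_{\partial_Ac_1}c_2-\nabla_{\partial_Bc_2}c_1=-\nabla_{\partial_Ac_2}c_1+\nabla_{\partial_Bc_1}c_2$; (M3) $[a,\partial_Ac]=\partial_A(\nabla_ac)-\nabla_{\partial_Bc}a$; (M4) $[b,\partial_Bc]=\partial_B(\nabla_bc)-\nabla_{\partial_Ac}b$; (M5) $[\rho_A(a),\rho_B(b)]=\rho_B(\nabla_ab)-\rho_A(\nabla_ba)$; (M6) $\nabla_b\nabla_ac-\nabla_a\nabla_bc-\nabla_{\nabla_ba}c+\nabla_{\nabla_ab}c=R_B(b,\partial_Bc)a-R_A(a,\partial_Ac)b$; (M7) $\partial_A(R_A(a_1,a_2)b)=-\nabla_b[a_1,a_2]+[\nabla_ba_1,a_2]+[a_1,\nabla_ba_2]+\nabla_{\nabla_{a_2}b}a_1-\nabla_{\nabla_{a_1}b}a_2$; (M8) $\partial_B(R_B(b_1,b_2)a)=-\nabla_a[b_1,b_2]+[\nabla_ab_1,b_2]+[b_1,\nabla_ab_2]+\nabla_{\nabla_{b_2}a}b_1-\nabla_{\nabla_{b_1}a}b_2$;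 (M9) $\mathrm d_{\nabla^A}R_B=\mathrm d_{\nabla^B}R_A$, where $R_B$ is viewed in $\Omega^1(A,\wedge^2B^*\otimes C)$ via $a\mapsto((b_1,b_2)\mapsto R_B(b_1,b_2)a)$, $R_A$ in $\Omega^1(B,\wedge^2A^*\otimes C)$ likewise, $\nabla^A,\nabla^B$ the induced connections on $\wedge^2B^*\otimes C$, $\wedge^2A^*\otimes C$, and $\Omega^2(A,\wedge^2B^*\otimes C)\cong\Omega^2(B,\wedge^2A^*\otimes C)$ via $\omega(a_1,a_2)(b_1,b_2)=\omega'(b_1,b_2)(a_1,a_2)$. *)

(* Algebraic (Lie–Rinehart) rendering of Lie algebroids:
   smooth functions  C^oo(M)  ~~> a commutative ring  R,
   vector fields  X(M)        ~~> an R-module  X  with bracket  brX  and an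
                                  action  act : X -> R -> R  by derivations,
   sections  Gamma(A)         ~~> an R-module  LA  with bracket  brA  and
                                  anchor  rho : LA -> X.
   Vector-bundle valued forms are represented by the multi-argument maps on
   sections they induce. *)
From HB Require Import structures.
From mathcomp Require Import all_boot all_order all_algebra.
Set Implicit Arguments.
Unset Strict Implicit.
Unset Printing Implicit Defensive.
Import Order.TTheory GRing.Theory Num.Theory.
Local Open Scope ring_scope.

Definition lie_bracket (L : zmodType) (br : L -> L -> L) : Prop :=
  ( (forall x y z, br (x + y) z = br x z + br y z) /\
      (forall x y z, br x (y + z) = br x y + br x z) /\
      (forall x, br x x = 0)  /\
      (forall x y z, br x (br y z) + br y (br z x) + br z (br x y) = 0)).

Definition tangent_algebroid (R : comPzRingType) (X : lmodType R)
    (brX : X -> X -> X) (act : X -> R -> R) : Prop :=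
  ( lie_bracket brX /\
      (forall (x y : X) g, act (x + y) g = act x g + act y g) /\
      (forall f (x : X) g, act (f *: x) g = f * act x g) /\
      (forall (x : X) f g, act x (f + g) = act x f + act x g) /\
      (forall (x : X) f g, act x (f * g) = act x f * g + f * act x g) /\
      (forall (x y : X) f, act (brX x y) f = act x (act y f) - act y (act x f))  /\
      (forall (x y : X) f, brX x (f *: y) = f *: brX x y + act x f *: y)).

Definition lie_algebroid (R : comPzRingType) (X : lmodType R)
    (brX : X -> X -> X) (act : X -> R -> R)
    (LA : lmodType R) (brA : LA -> LA -> LA) (rho : LA -> X) : Prop :=
  ( lie_bracket brA /\
      (forall a b : LA, rho (a + b) = rho a + rho b) /\
      (forall f (a : LA), rho (f *: a) = f *: rho a) /\
      (forall a b : LA, rho (brA a b) = brX (rho a) (rho b))  /\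
      (forall (a b : LA) f, brA a (f *: b) = f *: brA a b + act (rho a) f *: b)).

Definition linear_connection (R : comPzRingType) (X : lmodType R)
    (act : X -> R -> R) (LA : lmodType R) (nab : X -> LA -> LA) : Prop :=
  ( (forall (x y : X) a, nab (x + y) a = nab x a + nab y a) /\
      (forall f (x : X) a, nab (f *: x) a = f *: nab x a) /\
      (forall (x : X) (a b : LA), nab x (a + b) = nab x a + nab x b)  /\
      (forall (x : X) f (a : LA), nab x (f *: a) = f *: nab x a + act x f *: a)).

Definition curv (X LA : zmodType) (brX : X -> X -> X) (nab : X -> LA -> LA)
    (x y : X) (a : LA) : LA :=
  nab x (nab y a) - nab y (nab x a) - nab (brX x y) a.

Definition bas_TM (X LA : zmodType) (brX : X -> X -> X) (rho : LA -> X)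
    (nab : X -> LA -> LA) (a : LA) (x : X) : X :=
  brX (rho a) x + rho (nab x a).

Definition bas_A (X LA : zmodType) (brA : LA -> LA -> LA) (rho : LA -> X)
    (nab : X -> LA -> LA) (a1 a2 : LA) : LA :=
  brA a1 a2 + nab (rho a2) a1.

Definition Rbas (X LA : zmodType) (brX : X -> X -> X) (brA : LA -> LA -> LA)
    (rho : LA -> X) (nab : X -> LA -> LA) (a1 a2 : LA) (x : X) : LA :=
  - nab x (brA a1 a2) + brA (nab x a1) a2 + brA a1 (nab x a2)
  + nab (bas_TM brX rho nab a2 x) a1 - nab (bas_TM brX rho nab a1 x) a2.

(* Induced connection on  wedge^2 E^* (x) F  from connections on E and F:
   (nab_s phi)(e1,e2) = nab_s (phi(e1,e2)) - phi(nab_s e1, e2) - phi(e1, nab_s e2). *)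
Definition conn_wedge2 (S E : Type) (zF : zmodType) (nabE : S -> E -> E)
    (nabF : S -> zF -> zF) (s : S) (phi : E -> E -> zF) : E -> E -> zF :=
  fun e1 e2 => nabF s (phi e1 e2) - phi (nabE s e1) e2 - phi e1 (nabE s e2).

(* Values in V = wedge^2 E^* (x) F are represented as maps E -> E -> F. *)
Definition d_1form (S E : Type) (F : zmodType) (brS : S -> S -> S)
    (nabV : S -> (E -> E -> F) -> (E -> E -> F)) (om : S -> E -> E -> F)
    (s1 s2 : S) : E -> E -> F :=
  fun e1 e2 => nabV s1 (om s2) e1 e2 - nabV s2 (om s1) e1 e2 - om (brS s1 s2) e1 e2.

(* Conditions (M1)-(M9) for the 2-representations
   (nAB, nAC, RA) of A on dB : C -> B   and   (nBA, nBC, RB) of B on dA : C -> A,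
   where A, B are Lie algebroids with brackets brA, brB and anchors rA, rB into
   the vector fields X. *)
Definition matched_pair (X A B C : zmodType)
    (rA : A -> X) (rB : B -> X) (brA : A -> A -> A) (brB : B -> B -> B)
    (brX : X -> X -> X)
    (dA : C -> A) (dB : C -> B)
    (nAB : A -> B -> B) (nAC : A -> C -> C) (RA : A -> A -> B -> C)
    (nBA : B -> A -> A) (nBC : B -> C -> C) (RB : B -> B -> A -> C) : Prop :=
  ( (forall c, rA (dA c) = rB (dB c)) /\
      (forall c1 c2, nAC (dA c1) c2 - nBC (dB c2) c1
                              = - nAC (dA c2) c1 + nBC (dB c1) c2) /\
      (forall a c, brA a (dA c) = dA (nAC a c) - nBA (dB c) a) /\
      (forall b c, brB b (dB c) = dB (nBC b c) - nAB (dA c) b) /\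
      (forall a b, brX (rA a) (rB b) = rB (nAB a b) - rA (nBA b a)) /\
      (forall a b c, nBC b (nAC a c) - nAC a (nBC b c)
                              - nAC (nBA b a) c + nBC (nAB a b) c
                              = RB b (dB c) a - RA a (dA c) b) /\
      (forall a1 a2 b, dA (RA a1 a2 b) =
                  - nBA b (brA a1 a2) + brA (nBA b a1) a2 + brA a1 (nBA b a2)
                  + nBA (nAB a2 b) a1 - nBA (nAB a1 b) a2) /\
      (forall b1 b2 a, dB (RB b1 b2 a) =
                  - nAB a (brB b1 b2) + brB (nAB a b1) b2 + brB b1 (nAB a b2)
                  + nAB (nBA b2 a) b1 - nAB (nBA b1 a) b2)  /\
      (forall a1 a2 b1 b2,
                  d_1form brA (conn_wedge2 nAB nAC) (fun a b1 b2 => RB b1 b2 a) a1 a2 b1 b2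
                = d_1form brB (conn_wedge2 nBA nBC) (fun b a1 a2 => RA a1 a2 b) b1 b2 a1 a2)).

(* Only the additive structure matters: once every bracket, connection and the
   anchor is expanded by biadditivity, each condition becomes an identity among
   iterated brackets and covariant derivatives.  (M1), (M3), (M5) and (M7) then
   hold on the nose, (M2) and (M4) use antisymmetry, and (M6), (M8), (M9) use
   antisymmetry together with the Jacobi identity for [[.,.]] on vector fields
   and the fact that [rho] is a bracket morphism. *)
From mathcomp Require Import all_boot all_order all_algebra.
Import GRing.Theory.
Local Open Scope ring_scope.

Set Implicit Arguments.
Unset Strict Implicit.
Unset Printing Implicit Defensive.

Inductive zmod_expr :=
  | ZAtom of nat
  | ZZero
  | ZAdd of zmod_expr & zmod_expr
  | ZOpp of zmod_expr.

Fixpoint zmod_eval (V : zmodType) (env : seq V) (t : zmod_expr) : V :=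
  match t with
  | ZAtom n => env`_n
  | ZZero => 0
  | ZAdd t1 t2 => zmod_eval env t1 + zmod_eval env t2
  | ZOpp t1 => - zmod_eval env t1
  end.

Fixpoint zmod_coef (t : zmod_expr) (i : nat) : int :=
  match t with
  | ZAtom n => (n == i)%:Z
  | ZZero => 0
  | ZAdd t1 t2 => zmod_coef t1 i + zmod_coef t2 i
  | ZOpp t1 => - zmod_coef t1 i
  end.

Lemma zmod_evalE (V : zmodType) (env : seq V) t :
  zmod_eval env t = \sum_(i < size env) env`_i *~ zmod_coef t i.
Proof.
elim: t => [n||t1 IH1 t2 IH2|t1 IH1] /=.
- have [ltn_env|leq_env] := ltnP n (size env).
    rewrite (bigD1 (Ordinal ltn_env)) //= eqxx big1 ?addr0 // => i /eqP ne_i.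
    by case: eqP => // eq_n; case: ne_i; apply: val_inj.
  rewrite nth_default // big1 // => i _.
  by case: eqP => // eq_n; move: (ltn_ord i); rewrite -eq_n ltnNge leq_env.
- by rewrite big1 // => i _; rewrite mulr0z.
- by rewrite IH1 IH2 -big_split; apply: eq_bigr => i _; rewrite mulrzDr.
- by rewrite IH1 -sumrN; apply: eq_bigr => i _; rewrite mulrNz.
Qed.

Lemma zmod_eval_eq (V : zmodType) (env : seq V) t1 t2 :
  all (fun i => zmod_coef t1 i == zmod_coef t2 i) (iota 0 (size env)) ->
  zmod_eval env t1 = zmod_eval env t2.
Proof.
move/allP=> eq_coef; rewrite !zmod_evalE; apply: eq_bigr => i _.
by rewrite (eqP (eq_coef i _)) // mem_iota /=.
Qed.

Ltac zmod_index x env :=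
  lazymatch env with
  | (x :: _) => constr:(0%N)
  | (_ :: ?env') => let n := zmod_index x env' in constr:(n.+1)
  end.

Ltac zmod_atoms t env :=
  lazymatch t with
  | (?t1 + ?t2)%R => let env' := zmod_atoms t1 env in zmod_atoms t2 env'
  | (- ?t1)%R => zmod_atoms t1 env
  | 0%R => env
  | _ => match constr:(tt) with
         | _ => let _ := zmod_index t env in env
         | _ => constr:(t :: env)
         end
  end.

Ltac zmod_reify t env :=
  lazymatch t with
  | (?t1 + ?t2)%R =>
      let e1 := zmod_reify t1 env in let e2 := zmod_reify t2 env in
      constr:(ZAdd e1 e2)
  | (- ?t1)%R => let e1 := zmod_reify t1 env in constr:(ZOpp e1)
  | 0%R => constr:(ZZero)
  | _ => let n := zmod_index t env in constr:(ZAtom n)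
  end.

(* Closes an equation of a zmodType that holds formally, i.e. after treating
   every subterm other than [0], [+] and [-] as an independent atom. *)
Ltac zmod_eq :=
  lazymatch goal with
  | |- ?lhs = ?rhs =>
      let V := type of lhs in
      let env := zmod_atoms lhs (@nil V) in
      let env := zmod_atoms rhs env in
      let el := zmod_reify lhs env in
      let er := zmod_reify rhs env in
      change (zmod_eval env el = zmod_eval env er);
      apply: zmod_eval_eq; vm_compute; reflexivity
  end.

Lemma morphN_of_morphD (V W : zmodType) (f : V -> W) :
  {morph f : x y / x + y} -> {morph f : x / - x}.
Proof.
move=> fD x; have f0 : f 0 = 0 by apply: (@addrI _ (f 0)); rewrite -fD !addr0.
by apply/eqP; rewrite -subr_eq0 opprK -fD addNr f0.
Qed.

Section LieBracket.
Variables (V : zmodType) (br : V -> V -> V).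
Hypothesis br_lie : lie_bracket br.

Lemma lie_brDl y : {morph br^~ y : x z / x + z}.
Proof. by case: br_lie => brDl _ x z; apply: brDl. Qed.

Lemma lie_brDr x : {morph br x : y z / y + z}.
Proof. by case: br_lie => _ [brDr _]. Qed.

Lemma lie_brNl y : {morph br^~ y : x / - x}.
Proof. exact/morphN_of_morphD/lie_brDl. Qed.

Lemma lie_brNr x : {morph br x : y / - y}.
Proof. exact/morphN_of_morphD/lie_brDr. Qed.

Lemma lie_brC x y : br y x = - br x y.
Proof.
have [_ [_ [brxx _]]] := br_lie.
have := brxx (x + y); rewrite lie_brDl !lie_brDr !brxx add0r addr0 => brxy.
by apply/eqP; rewrite -subr_eq0 opprK addrC brxy.
Qed.

(* Jacobi, read as: [ad p] is a derivation of the bracket. *)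
Lemma lie_br_leibniz p x y : br (br p x) y = br p (br x y) - br x (br p y).
Proof.
have [_ [_ [_ jacobi]]] := br_lie.
have := jacobi p x y; rewrite (lie_brC (br p x)) (lie_brC p y) lie_brNr => eq0.
by apply/eqP; rewrite -subr_eq0 -oppr_eq0 -eq0; apply/eqP; zmod_eq.
Qed.

End LieBracket.

Section BasicMatchedPair.
Variables (X LA : zmodType) (brX : X -> X -> X) (brA : LA -> LA -> LA).
Variables (rho : LA -> X) (nab : X -> LA -> LA).
Hypotheses (brX_lie : lie_bracket brX) (brA_lie : lie_bracket brA).
Hypothesis rhoD : {morph rho : a b / a + b}.
Hypothesis rho_br : forall a b, rho (brA a b) = brX (rho a) (rho b).
Hypothesis nabDl : forall a, {morph nab^~ a : x y / x + y}.
Hypothesis nabDr : forall x, {morph nab x : a b / a + b}.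

Let rhoN := morphN_of_morphD rhoD.
Let nabNl a := morphN_of_morphD (nabDl a).
Let nabNr x := morphN_of_morphD (nabDr x).
Let expandE := (nabDl, nabNl, nabDr, nabNr, rhoD, rhoN, rho_br,
  lie_brDl brX_lie, lie_brDr brX_lie, lie_brNl brX_lie, lie_brNr brX_lie,
  lie_brDl brA_lie, lie_brDr brA_lie, lie_brNl brA_lie, lie_brNr brA_lie).

Local Notation basTM := (bas_TM brX rho nab).
Local Notation basA := (bas_A brA rho nab).
Local Notation Rbasic := (Rbas brX brA rho nab).
Local Notation R_nab := (curv brX nab).

Lemma basic_M2 c1 c2 :
  basA c1 c2 - nab (rho c2) c1 = - basA c2 c1 + nab (rho c1) c2.
Proof. by rewrite /bas_A (lie_brC brA_lie c2); zmod_eq. Qed.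

Lemma basic_M4 x c :
  brX x (rho c) = rho (nab x c) - basTM c x.
Proof. by rewrite /bas_TM (lie_brC brX_lie (rho c)); zmod_eq. Qed.

Lemma basic_M6 a x c :
  nab x (basA a c) - basA a (nab x c) - basA (nab x a) c + nab (basTM a x) c
  = R_nab x (rho c) a - Rbasic a c x.
Proof.
rewrite /bas_A /bas_TM /curv /Rbas (lie_brC brX_lie (rho c)) !expandE.
zmod_eq.
Qed.

Lemma basic_M8 x1 x2 a :
  rho (R_nab x1 x2 a) =
    - basTM a (brX x1 x2) + brX (basTM a x1) x2 + brX x1 (basTM a x2)
    + basTM (nab x2 a) x1 - basTM (nab x1 a) x2.
Proof.
rewrite /bas_TM /curv !expandE (lie_br_leibniz brX_lie (rho a) x1 x2).
by rewrite (lie_brC brX_lie (rho (nab x2 a)) x1); zmod_eq.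
Qed.

Lemma basic_M9 a1 a2 x1 x2 :
  d_1form brA (conn_wedge2 basTM basA) (fun a x1 x2 => R_nab x1 x2 a) a1 a2 x1 x2
  = d_1form brX (conn_wedge2 nab nab) (fun x a1 a2 => Rbasic a1 a2 x) x1 x2 a1 a2.
Proof.
rewrite /d_1form /conn_wedge2 /curv /Rbas /bas_TM /bas_A !expandE.
(* [zmod_eq] sees [brA a b] and [brA b a] as unrelated atoms, so matching
   brackets are first oriented alike. *)
rewrite (lie_brC brA_lie a2 (nab (brX x1 x2) a1)).
rewrite (lie_brC brA_lie a2 (nab x1 (nab x2 a1))) (lie_brC brA_lie a2 (nab x2 (nab x1 a1))).
rewrite (lie_br_leibniz brX_lie (rho a1) x1 x2) (lie_br_leibniz brX_lie (rho a2) x1 x2).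
rewrite (lie_brC brX_lie (rho (nab x2 a1)) x1) (lie_brC brX_lie (rho (nab x2 a2)) x1).
rewrite !expandE; zmod_eq.
Qed.

Theorem basic_matched_pair :
  matched_pair rho id brA brX brX id rho basTM basA Rbasic nab nab R_nab.
Proof.
split=> //; split; first exact: basic_M2.
split=> [a c|]; first by rewrite /bas_A; zmod_eq.
split; first exact: basic_M4.
split=> [a x|]; first by rewrite /bas_TM; zmod_eq.
split; first exact: basic_M6.
split=> //; split; first exact: basic_M8.
exact: basic_M9.
Qed.

End BasicMatchedPair.

Theorem mainTheorem3 (R : comPzRingType) (X : lmodType R) (brX : X -> X -> X)
    (act : X -> R -> R) (LA : lmodType R) (brA : LA -> LA -> LA)
    (rho : LA -> X) (nab : X -> LA -> LA) :
  tangent_algebroid brX act ->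
  lie_algebroid brX act brA rho ->
  linear_connection act nab ->
  matched_pair (X := X) (A := LA) (B := X) (C := LA)
    rho id brA brX brX
    id rho
    (bas_TM brX rho nab) (bas_A brA rho nab) (Rbas brX brA rho nab)
    nab nab (curv brX nab).
Proof.
move=> [brX_lie _] [brA_lie [rhoD [_ [rho_br _]]]] [nabDl [_ [nabDr _]]].
apply: basic_matched_pair => // a x y; exact: nabDl.
Qed.
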